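(* Let $n\ge 2$ and let $h_{ab}\in\Gamma_{\mathrm{pc}}(T^*\mathbb{R}^n\otimes_s T^*\mathbb{R}^n)$ be a smooth, past-compact, symmetric $(0,2)$-tensor field on $n$-dimensional Minkowski spacetime, with trace $h:=\eta^{ab}h_{ab}$. Then there exist unique smooth past-compact fields $w\in C^\infty_{\mathrm{pc}}(\mathbb{R}^n)$, $v^{\mathrm{T}}_a\in\Gamma_{\mathrm{pc}}(T^*\mathbb{R}^n)$, $h^{\mathrm{TT}}_{ab}\in\Gamma_{\mathrm{pc}}(T^*\mathbb{R}^n\otimes_s T^*\mathbb{R}^n)$ with $\partial^a v^{\mathrm{T}}_a=0$, $\partial^a h^{\mathrm{TT}}_{ab}=0$ and $\eta^{ab}h^{\mathrm{TT}}_{ab}=0$, such that $$h_{ab}=h^{\mathrm{S}}_{ab}+h^{\mathrm{V}}_{ab}+h^{\mathrm{TT}}_{ab},\qquad h^{\mathrm{S}}_{ab}:=\Big(\partial_a\partial_b-\tfrac1n\eta_{ab}\square\Big)w+\tfrac1n\eta_{ab}h,\qquad h^{\mathrm{V}}_{ab}:=\partial_a v^{\mathrm{T}}_b+\partial_b v^{\mathrm{T}}_a .$$ Moreover, $w$ and $v^{\mathrm{T}}_a$ are given explicitly by $$w=\frac{n}{n-1}\,\mathsf{G}_{\mathrm{ret}}^{\circ 2}\Big(\partial^a\partial^b h_{ab}-\tfrac1n\square h\Big),\qquad v^{\mathrm{T}}_b=\mathsf{G}_{\mathrm{ret}}\Big(\partial^a h_{ab}-\tfrac1n\partial_b h-\tfrac{n-1}{n}\partial_b\square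 w\Big).$$
   Context: Minkowski spacetime $(\mathbb{R}^n,\eta_{ab})$ with $\eta=\mathrm{diag}(-1,1,\dots,1)$; indices are raised and lowered with $\eta$; $\square:=\eta^{ab}\partial_a\partial_b$. A set $A\subset\mathbb{R}^n$ is past-compact if $A\cap J^-(K)$ is compact for every compact $K$, where $J^-$ denotes the causal past; $C^\infty_{\mathrm{pc}}$, $\Gamma_{\mathrm{pc}}$ denote smooth functions/sections with past-compact support. $\mathsf{G}_{\mathrm{ret}}$ is the retarded Green operator of $\square$, i.e. the unique linear map $C^\infty_{\mathrm{pc}}\to C^\infty_{\mathrm{pc}}$ with $\square\mathsf{G}_{\mathrm{ret}}f=f$ and $\mathsf{G}_{\mathrm{ret}}\square f=f$ (applied componentwise to tensors), and $\mathsf{G}_{\mathrm{ret}}^{\circ 2}=\mathsf{G}_{\mathrm{ret}}\circ\mathsf{G}_{\mathrm{ret}}$. *)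

(* Minkowski spacetime R^n is modelled as 'rV[R]_n
   (R : realType), index 0 is the time coordinate, eta = diag(-1,1,...,1). *)
From HB Require Import structures.
From mathcomp Require Import all_boot all_order all_algebra.
From mathcomp Require Import all_classical all_reals all_analysis.
Set Implicit Arguments. Unset Strict Implicit. Unset Printing Implicit Defensive.
Import Order.TTheory GRing.Theory Num.Theory.
Import numFieldNormedType.Exports.
Local Open Scope classical_set_scope.
Local Open Scope ring_scope.

Section Minkowski.
Variables (R : realType) (n : nat).
Notation pt := 'rV[R]_n.

(* diagonal entries of the Minkowski metric (equal to those of its inverse) *)
Definition meta (a : 'I_n) : R := if val a == 0%N then -1 else 1.
Definition etam (a b : 'I_n) : R := if a == b then meta a else 0.

Definition evec (a : 'I_n) : pt := delta_mx 0 a.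

Definition partial (a : 'I_n) (f : pt -> R) : pt -> R :=
  fun x => derive f x (evec a).

Definition iter_partial (l : seq 'I_n) (f : pt -> R) : pt -> R :=
  foldr partial f l.

Definition smooth (f : pt -> R) : Prop :=
  forall (l : seq 'I_n) (x : pt), differentiable (iter_partial l f) x.

Definition box (f : pt -> R) : pt -> R :=
  fun x => \sum_(a < n) meta a * partial a (partial a f) x.

(* causal relation: y is in the causal past of x (J^-(x)), i.e. x - y is
   future-directed causal or zero *)
Definition causal_past (y x : pt) : Prop :=
  let d := x - y in
  (forall i : 'I_n, val i = 0%N -> 0 <= d 0 i) /\
  \sum_(i < n) meta i * (d 0 i) ^+ 2 <= 0.

Definition Jminus (K : set pt) : set pt :=
  [set y | exists2 x, K x & causal_past y x].

Definition past_compact (A : set pt) : Prop :=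
  forall K : set pt, compact K -> compact (A `&` Jminus K).

Definition pc_scalar (f : pt -> R) : Prop :=
  past_compact (closure [set x | f x != 0]).
Definition pc_covector (v : 'I_n -> pt -> R) : Prop :=
  past_compact (closure [set x | exists a, v a x != 0]).
Definition pc_tensor2 (h : 'I_n -> 'I_n -> pt -> R) : Prop :=
  past_compact (closure [set x | exists a b, h a b x != 0]).

Definition is_retarded_green (G : (pt -> R) -> (pt -> R)) : Prop :=
  (forall f, smooth f -> pc_scalar f ->
     [/\ smooth (G f), pc_scalar (G f), box (G f) = f & G (box f) = f]) /\
  (forall (c : R) f g, smooth f -> pc_scalar f -> smooth g -> pc_scalar g ->
     G (fun x => c * f x + g x) = (fun x => c * G f x + G g x)).

End Minkowski.
Arguments meta {R n}.
Arguments etam {R n}.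
Arguments evec {R n}.

From HB Require Import structures.
From mathcomp Require Import all_boot all_order all_algebra.
From mathcomp Require Import all_classical all_reals all_analysis.
From mathcomp Require Import ring.
Set Implicit Arguments. Unset Strict Implicit. Unset Printing Implicit Defensive.
Import Order.TTheory GRing.Theory Num.Theory.
Import numFieldNormedType.Exports.
Local Open Scope classical_set_scope.
Local Open Scope ring_scope.

(* Taking the divergence of h = h^S + h^V + h^TT and using ∂^a v_a = 0 and
   ∂^a h^TT_ab = 0 gives
     ∂^a h_ab = (1 - 1/n) ∂_b □w + (1/n) ∂_b h + □v_b,
   and a second divergence gives ∂^a ∂^b h_ab - (1/n) □h = (1 - 1/n) □□w.
   Since G_ret inverts □ on smooth past-compact functions, these two equations
   force the stated formulas for w and v, and h^TT is what remains.
   Conversely, for w and v so defined, □(∂^a v_a) = 0, hence ∂^a v_a = 0, and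
   the same divergence identity shows that h^TT := h - h^S - h^V is
   divergence-free; it is traceless because h^S carries the whole trace.
   Throughout, mixed partial derivatives of smooth functions commute (Clairaut,
   proved from the mean value theorem), so that □ commutes with every ∂_a. *)

Section SmoothCalculus.
Variables (R : realType) (n : nat).
Notation pt := 'rV[R]_n.
Implicit Types (f g : pt -> R).

Lemma smooth_differentiable f : smooth f -> forall x, differentiable f x.
Proof. by move=> sf; exact: (sf [::]). Qed.

Lemma smooth_partial a f : smooth f -> smooth (partial a f).
Proof.
by move=> sf l x; have := sf (l ++ [:: a]) x; rewrite /iter_partial foldr_cat.
Qed.

Lemma partialD a f g :
  (forall x, differentiable f x) -> (forall x, differentiable g x) ->
  partial a (fun y => f y + g y) = (fun y => partial a f y + partial a g y).
Proof.
move=> df dg; apply/funext => x.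
exact (deriveD (diff_derivable (v := evec a) (df x))
               (diff_derivable (v := evec a) (dg x))).
Qed.

Lemma partialB a f g :
  (forall x, differentiable f x) -> (forall x, differentiable g x) ->
  partial a (fun y => f y - g y) = (fun y => partial a f y - partial a g y).
Proof.
move=> df dg; apply/funext => x.
exact (deriveB (diff_derivable (v := evec a) (df x))
               (diff_derivable (v := evec a) (dg x))).
Qed.

Lemma partialZ a (c : R) f : (forall x, differentiable f x) ->
  partial a (fun y => c * f y) = (fun y => c * partial a f y).
Proof.
move=> df; apply/funext => x.
exact (deriveMl c (diff_derivable (v := evec a) (df x))).
Qed.

Lemma partial_cst a (k : R) : partial a (fun _ : pt => k) = (fun _ => 0).
Proof. by apply/funext => x; rewrite /partial derive_cst. Qed.

Lemma partial_sum a m (F : 'I_m -> pt -> R) :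
  (forall i x, differentiable (F i) x) ->
  partial a (fun y => \sum_(i < m) F i y) =
  (fun y => \sum_(i < m) partial a (F i) y).
Proof.
move=> dF; apply/funext => x; rewrite /partial -fct_sumE derive_sum //.
by move=> i; exact: diff_derivable.
Qed.

Lemma iter_partialD l f g : smooth f -> smooth g ->
  iter_partial l (fun y => f y + g y) =
  (fun y => iter_partial l f y + iter_partial l g y).
Proof. by move=> sf sg; elim: l => //= a l ->; exact: partialD (sf l) (sg l). Qed.

Lemma iter_partialZ l (c : R) f : smooth f ->
  iter_partial l (fun y => c * f y) = (fun y => c * iter_partial l f y).
Proof. by move=> sf; elim: l => //= a l ->; exact: partialZ (sf l). Qed.

Lemma smoothD f g : smooth f -> smooth g -> smooth (fun y => f y + g y).
Proof.
move=> sf sg l x; rewrite iter_partialD //.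
exact: differentiableD (sf l x) (sg l x).
Qed.

Lemma smoothZ (c : R) f : smooth f -> smooth (fun y => c * f y).
Proof.
move=> sf l x; rewrite iter_partialZ //.
exact: differentiableM (differentiable_cst c x) (sf l x).
Qed.

Lemma smoothB f g : smooth f -> smooth g -> smooth (fun y => f y - g y).
Proof.
move=> sf sg; have -> : (fun y => f y - g y) = (fun y => f y + (-1) * g y).
  by apply/funext => y; rewrite mulN1r.
by apply: smoothD => //; exact: smoothZ.
Qed.

Lemma smooth_cst (k : R) : smooth (fun _ : pt => k).
Proof.
move=> l; have -> : iter_partial l (fun _ : pt => k) =
    (fun _ => if l is [::] then k else 0).
  by elim: l => [//|a l IH] /=; rewrite IH; case: l {IH} => *; exact: partial_cst.
by move=> x; exact: differentiable_cst.
Qed.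

Lemma smooth_sum m (F : 'I_m -> pt -> R) :
  (forall i, smooth (F i)) -> smooth (fun y => \sum_(i < m) F i y).
Proof.
move=> sF; rewrite -fct_sumE; elim/big_ind : _ => //; first exact: (smooth_cst 0).
by move=> f g; exact: smoothD.
Qed.

Lemma smooth_box f : smooth f -> smooth (box f).
Proof.
move=> sf; apply: smooth_sum => a; apply: smoothZ.
by do 2 apply: smooth_partial.
Qed.

Lemma box_cst (k : R) : box (fun _ : pt => k) = (fun _ => 0).
Proof.
by apply/funext => x; rewrite /box big1 // => a _; rewrite !partial_cst mulr0.
Qed.

End SmoothCalculus.

Create HintDb smooth_fields.

Ltac smooth_tac :=
  cbv beta;
  match goal with
  | |- forall x, differentiable _ x => apply: smooth_differentiable; smooth_tac
  | |- forall _, _ => intro; smooth_tac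
  | |- smooth (partial _ _) => apply: smooth_partial; smooth_tac
  | |- smooth (box _) => apply: smooth_box; smooth_tac
  | |- smooth (fun y => partial ?a ?f y) =>
      apply: (smooth_partial a (f := f)); smooth_tac
  | |- smooth (fun y => box ?f y) => apply: (smooth_box (f := f)); smooth_tac
  | |- smooth (fun y => @?A y + @?B y) =>
      apply: (smoothD (f := A) (g := B)); smooth_tac
  | |- smooth (fun y => @?A y - @?B y) =>
      apply: (smoothB (f := A) (g := B)); smooth_tac
  | |- smooth (fun y => ?c * @?A y) => apply: (smoothZ c (f := A)); smooth_tac
  | |- smooth (fun y => \sum_(i < _) _) => apply: smooth_sum; smooth_tac
  | |- smooth (fun _ => ?k) => exact: smooth_cst
  | |- smooth _ => solve [eauto with smooth_fields]
  end.

Section Clairaut.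
Variable R : realType.

Lemma is_derive_line (V : normedModType R) (F : V -> R) (y w : V) (s : R) :
  (forall x, differentiable F x) ->
  is_derive s 1 (fun t : R => F (y + t *: w)) (derive F (y + s *: w) w).
Proof.
move=> dF.
have E : (fun h : R => h^-1 *: (F (y + (h *: 1 + s) *: w) - F (y + s *: w))) =
         (fun h : R => h^-1 *: (F (h *: w + (y + s *: w)) - F (y + s *: w))).
  apply/funext => h; congr (_ *: (F _ - _)).
  by rewrite scalerDl [h *: 1]mulr1 addrCA addrA.
split; last by rewrite /derive /= E.
by rewrite /derivable /= E; exact: (@diff_derivable _ _ _ _ _ w (dF (y + s *: w))).
Qed.

Lemma mvt_line (V : normedModType R) (F : V -> R) (y w : V) (s : R) :
  (forall x, differentiable F x) -> 0 < s ->
  exists2 c, 0 < c < s & F (y + s *: w) - F y = s * derive F (y + c *: w) w.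
Proof.
move=> dF s0.
have := @MVT R (fun t : R => F (y + t *: w))
  (fun t => derive F (y + t *: w) w) 0 s s0.
case=> [t _||c].
- exact: is_derive_line.
- apply: continuous_subspaceT => t; apply: differentiable_continuous.
  by apply/derivable1_diffP; have [] := is_derive_line y w t dF.
rewrite in_itv /= scale0r addr0 subr0 => cs ->.
by exists c => //; rewrite mulrC.
Qed.

Lemma derive_shift (V : normedModType R) (F : V -> R) (c z w : V) :
  derive (fun y => F (y + c)) z w = derive F (z + c) w.
Proof.
rewrite /derive /=.
suff -> : (fun h : R => h^-1 *: (F (h *: w + z + c) - F (z + c))) =
          (fun h => h^-1 *: (F (h *: w + (z + c)) - F (z + c))) by [].
by apply/funext => h; rewrite addrA.
Qed.

Lemma continuous_eq_of_approx (V : normedModType R) (g1 g2 : V -> R) (x : V) :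
  {for x, continuous g1} -> {for x, continuous g2} ->
  (forall e, 0 < e -> exists y1 y2,
     [/\ `|x - y1| < e, `|x - y2| < e & g1 y1 = g2 y2]) ->
  g1 x = g2 x.
Proof.
move=> c1 c2 approx; apply/eqP; rewrite -subr_eq0 -normr_le0.
apply/ler_addgt0Pr => e e0; rewrite add0r.
have e20 : 0 < e / 2 by rewrite divr_gt0.
have [d d0 near_x] : exists2 d : R, 0 < d & forall y, `|x - y| < d ->
    `|g1 x - g1 y| < e / 2 /\ `|g2 x - g2 y| < e / 2.
  have /cvgrPdist_lt/(_ _ e20) n1 := c1.
  have /cvgrPdist_lt/(_ _ e20) n2 := c2.
  have [d d0 Hd] := (nbhs_normP _ _).1 (filterI n1 n2).
  by exists d => // y /Hd.
have [y1 [y2 [/near_x[l1 _] /near_x[_ l2] g12]]] := approx d d0.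
have -> : g1 x - g2 x = (g1 x - g1 y1) - (g2 x - g2 y2).
  by rewrite g12 opprB addrA subrK.
rewrite (le_trans (ler_normB _ _)) // [e]splitr.
by rewrite ltW // ltrD.
Qed.

Variable n : nat.
Notation pt := 'rV[R]_n.

Lemma second_difference_mvt (F : pt -> R) a b (x : pt) (s t : R) :
  smooth F -> 0 < s -> 0 < t ->
  exists sg tu : R, [/\ 0 < sg < s, 0 < tu < t &
   F (x + s *: evec a + t *: evec b) - F (x + s *: evec a)
     - (F (x + t *: evec b) - F x) =
   s * t * partial b (partial a F) (x + sg *: evec a + tu *: evec b)].
Proof.
move=> sF s0 t0; have dF := smooth_differentiable sF.
have dFt z : differentiable (fun y => F (y + t *: evec b)) z.
  exact: differentiable_comp.
have dD z := differentiableB (dFt z) (dF z).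
have [sg sgs ->] := mvt_line x (evec a) dD s0.
have [tu tut E] := mvt_line (x + sg *: evec a) (evec b)
  (smooth_differentiable (smooth_partial a sF)) t0.
exists sg, tu; split => //; rewrite -mulrA -E; congr (_ * _).
rewrite (deriveB (@diff_derivable _ _ _ _ _ (evec a) (dFt _))
                 (@diff_derivable _ _ _ _ _ (evec a) (dF _))).
by rewrite derive_shift.
Qed.

Lemma partialC (F : pt -> R) a b : smooth F ->
  partial a (partial b F) = partial b (partial a F).
Proof.
move=> sF; apply/funext => x; apply: continuous_eq_of_approx.
- exact: differentiable_continuous (sF [:: a; b] x).
- exact: differentiable_continuous (sF [:: b; a] x).
move=> e e0.
pose N := `|evec a : pt| + `|evec b : pt| + 1.
have N0 : 0 < N by rewrite ltr_wpDl ?addr_ge0.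
pose s := e / N; have s0 : 0 < s by rewrite divr_gt0.
have close p q : 0 < p < s -> 0 < q < s ->
    `|x - (x + p *: evec a + q *: evec b)| < e.
  move=> /andP[p0 ps] /andP[q0 qs].
  rewrite -addrA opprD addrA subrr add0r normrN.
  rewrite (le_lt_trans (ler_normD _ _)) // !normrZ !gtr0_norm //.
  apply: (@le_lt_trans _ _ (s * (`|evec a : pt| + `|evec b : pt|))).
    by rewrite mulrDr lerD // ler_wpM2r // ltW.
  by rewrite /s mulrAC ltr_pdivrMr // ltr_pM2l // /N ltrDl.
(* Expanding the same second difference in both orders. *)
have [sg1 [tu1 [sg1s tu1s E1]]] := second_difference_mvt a b x sF s0 s0.
have [sg2 [tu2 [sg2s tu2s E2]]] := second_difference_mvt b a x sF s0 s0.
exists (x + tu2 *: evec a + sg2 *: evec b), (x + sg1 *: evec a + tu1 *: evec b).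
split; [exact: close | exact: close |].
have ss : s * s != 0 by rewrite mulf_neq0 // gt_eqF.
apply: (mulfI ss); rewrite -E1 -[x + tu2 *: _ + _]addrAC -E2.
rewrite [x + s *: evec b + _]addrAC.
(* Abstracting the values of F first keeps ring from comparing the matrix
   arguments by conversion, which does not terminate in practice. *)
by move: (F _) (F _) (F _) (F _) => A B C D; ring.
Qed.

End Clairaut.

Section PastCompactSupport.
Variables (R : realType) (n : nat).
Notation pt := 'rV[R]_n.
Implicit Types (f g : pt -> R) (A B S : set pt).

Lemma past_compact_closed_sub A B :
  closed A -> A `<=` B -> past_compact B -> past_compact A.
Proof.
move=> cA AB pB K cK.
have -> : A `&` Jminus K = (B `&` Jminus K) `&` A.
  by rewrite setIAC (setIC B) (setIidl AB).
exact: compact_closedI (pB K cK) cA.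
Qed.

Lemma past_compactU A B :
  past_compact A -> past_compact B -> past_compact (A `|` B).
Proof.
by move=> pA pB K cK; rewrite setIUl; apply: compactU; [exact: pA | exact: pB].
Qed.

Lemma pc_scalar_sub f S :
  [set x | f x != 0] `<=` closure S -> past_compact (closure S) -> pc_scalar f.
Proof.
move=> fS; apply: past_compact_closed_sub; first exact: closed_closure.
by rewrite closureE; apply: smallest_sub => //; exact: closed_closure.
Qed.

Lemma pc_scalar0 : pc_scalar (fun _ : pt => 0).
Proof.
apply: (@pc_scalar_sub _ set0) => [x /=|]; first by rewrite eqxx.
by rewrite closure0 => K _; rewrite set0I; exact: compact0.
Qed.

Lemma pc_scalarD f g :
  pc_scalar f -> pc_scalar g -> pc_scalar (fun y => f y + g y).
Proof.
move=> pf pg; apply: (@pc_scalar_sub _ ([set x | f x != 0] `|` [set x | g x != 0])).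
  move=> x /= fg0; apply: subset_closure.
  by have [f0|] := eqVneq (f x) 0; [right; rewrite f0 add0r in fg0 | left].
by rewrite closureU; exact: past_compactU.
Qed.

Lemma pc_scalarMl (k : pt -> R) f : pc_scalar f -> pc_scalar (fun y => k y * f y).
Proof.
apply: pc_scalar_sub => x /= kf0; apply: subset_closure => /=.
by apply: contraNneq kf0 => ->; rewrite mulr0.
Qed.

Lemma pc_scalarB f g :
  pc_scalar f -> pc_scalar g -> pc_scalar (fun y => f y - g y).
Proof.
move=> pf pg; have -> : (fun y => f y - g y) = (fun y => f y + (-1) * g y).
  by apply/funext => y; rewrite mulN1r.
by apply: pc_scalarD => //; exact: (@pc_scalarMl (fun _ => -1)).
Qed.

Lemma pc_scalar_sum (I : finType) (F : I -> pt -> R) :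
  (forall i, pc_scalar (F i)) -> pc_scalar (fun y => \sum_(i : I) F i y).
Proof.
move=> pF; rewrite -fct_sumE; elim/big_ind : _ => //; first exact: pc_scalar0.
by move=> f g; exact: pc_scalarD.
Qed.

Lemma partial_support_sub a f :
  [set x | partial a f x != 0] `<=` closure [set x | f x != 0].
Proof.
move=> x /= dfx0 B Bx; apply: contrapT => noB.
have f0 : \near x, f x = (cst 0 : pt -> R) x.
  apply: filterS Bx => y By; apply/eqP/negPn/negP => fy0.
  by apply: noB; exists y.
by move: dfx0; rewrite /partial (near_eq_derive _ f0) derive_cst eqxx.
Qed.

Lemma pc_scalar_partial a f : pc_scalar f -> pc_scalar (partial a f).
Proof. exact/pc_scalar_sub/partial_support_sub. Qed.

Lemma pc_scalar_box f : pc_scalar f -> pc_scalar (box f).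
Proof.
move=> pf; apply: pc_scalar_sum => a; apply: (@pc_scalarMl (fun _ => meta a)).
by do 2 apply: pc_scalar_partial.
Qed.

Lemma exists_neq0_sumsqr (I : finType) (F : I -> R) :
  (exists i, F i != 0) <-> \sum_(i : I) F i ^+ 2 != 0.
Proof.
rewrite psumr_neq0 => [|i _]; last exact: sqr_ge0.
split=> [[i Fi0]|/hasP[i _ /andP[_]]].
  by apply/hasP; exists i; rewrite ?mem_index_enum //= exprn_even_gt0.
by rewrite exprn_even_gt0 //= => Fi0; exists i.
Qed.

(* The joint support is the support of the sum of squares. *)
Lemma past_compact_joint_support (I : finType) (F : I -> pt -> R) :
  past_compact (closure [set x | exists i, F i x != 0]) <->
  forall i, pc_scalar (F i).
Proof.
split=> [pF i|pF].
  by apply: pc_scalar_sub pF => x Fix0; apply: subset_closure; exists i.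
have -> : [set x | exists i, F i x != 0] = [set x | \sum_i F i x ^+ 2 != 0].
  by apply/seteqP; split=> x /exists_neq0_sumsqr.
apply: pc_scalar_sum => i; exact: pc_scalarMl.
Qed.

Lemma pc_covectorP (v : 'I_n -> pt -> R) :
  pc_covector v <-> forall a, pc_scalar (v a).
Proof. exact: past_compact_joint_support. Qed.

Lemma pc_tensor2P (t : 'I_n -> 'I_n -> pt -> R) :
  pc_tensor2 t <-> forall a b, pc_scalar (t a b).
Proof.
rewrite /pc_tensor2.
have -> : [set x | exists a b, t a b x != 0] =
          [set x | exists p : 'I_n * 'I_n, t p.1 p.2 x != 0].
  by apply/seteqP; split=> x [a]; [move=> [b]; exists (a, b) | exists a.1, a.2].
rewrite past_compact_joint_support.
by split=> [pt a b|pt [a b]]; [exact: (pt (a, b)) | exact: pt].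
Qed.

Definition smooth_pc f := smooth f /\ pc_scalar f.

Lemma smooth_pc_smooth f : smooth_pc f -> smooth f.
Proof. by case. Qed.

Lemma smooth_pcD f g : smooth_pc f -> smooth_pc g -> smooth_pc (fun y => f y + g y).
Proof. by move=> [sf pf] [sg pg]; split; [exact: smoothD | exact: pc_scalarD]. Qed.

Lemma smooth_pcB f g : smooth_pc f -> smooth_pc g -> smooth_pc (fun y => f y - g y).
Proof. by move=> [sf pf] [sg pg]; split; [exact: smoothB | exact: pc_scalarB]. Qed.

Lemma smooth_pcZ (c : R) f : smooth_pc f -> smooth_pc (fun y => c * f y).
Proof.
by move=> [sf pf]; split; [exact: smoothZ | exact: (@pc_scalarMl (fun _ => c))].
Qed.

Lemma smooth_pc_sum m (F : 'I_m -> pt -> R) :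
  (forall i, smooth_pc (F i)) -> smooth_pc (fun y => \sum_(i < m) F i y).
Proof.
by move=> sF; split; [apply: smooth_sum | apply: pc_scalar_sum] => i; case: (sF i).
Qed.

Lemma smooth_pc_partial a f : smooth_pc f -> smooth_pc (partial a f).
Proof.
by move=> [sf pf]; split; [exact: smooth_partial | exact: pc_scalar_partial].
Qed.

Lemma smooth_pc_box f : smooth_pc f -> smooth_pc (box f).
Proof. by move=> [sf pf]; split; [exact: smooth_box | exact: pc_scalar_box]. Qed.

Lemma smooth_pc0 : smooth_pc (fun _ : pt => 0).
Proof. by split; [exact: smooth_cst | exact: pc_scalar0]. Qed.

End PastCompactSupport.

#[export] Hint Resolve smooth_pc_smooth : smooth_fields.

Section RetardedGreen.
Variables (R : realType) (n : nat).
Notation pt := 'rV[R]_n.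
Variable G : (pt -> R) -> (pt -> R).
Hypothesis hG : is_retarded_green G.
Implicit Types (f u : pt -> R).

Lemma smooth_pc_Green f : smooth_pc f -> smooth_pc (G f).
Proof. by move=> [sf pf]; have [] := hG.1 f sf pf. Qed.

Lemma box_Green f : smooth_pc f -> box (G f) = f.
Proof. by move=> [sf pf]; have [] := hG.1 f sf pf. Qed.

Lemma Green_box f : smooth_pc f -> G (box f) = f.
Proof. by move=> [sf pf]; have [] := hG.1 f sf pf. Qed.

Lemma eq_Green_of_box u f : smooth_pc u -> box u = f -> u = G f.
Proof. by move=> su <-; rewrite Green_box. Qed.

Lemma Green0 : G (fun _ => 0) = (fun _ => 0).
Proof. by rewrite -[in G _](@box_cst R n 0) Green_box //; exact: smooth_pc0. Qed.

Lemma GreenZ (c : R) f : smooth_pc f -> G (fun x => c * f x) = (fun x => c * G f x).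
Proof.
move=> [sf pf]; have [s0 p0] := @smooth_pc0 R n.
have := hG.2 c f (fun _ => 0) sf pf s0 p0; rewrite Green0.
under eq_fun do rewrite addr0; move=> ->.
by apply/funext => x; rewrite addr0.
Qed.

End RetardedGreen.

#[export] Hint Resolve smooth_pc_Green : smooth_fields.

Ltac smooth_pc_tac :=
  cbv beta;
  match goal with
  | |- forall _, _ => intro; smooth_pc_tac
  | |- smooth_pc (partial _ _) => apply: smooth_pc_partial; smooth_pc_tac
  | |- smooth_pc (box _) => apply: smooth_pc_box; smooth_pc_tac
  | |- smooth_pc (fun y => partial ?a ?f y) =>
      apply: (smooth_pc_partial a (f := f)); smooth_pc_tac
  | |- smooth_pc (fun y => box ?f y) =>
      apply: (smooth_pc_box (f := f)); smooth_pc_tac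
  | |- smooth_pc (fun y => @?A y + @?B y) =>
      apply: (smooth_pcD (f := A) (g := B)); smooth_pc_tac
  | |- smooth_pc (fun y => @?A y - @?B y) =>
      apply: (smooth_pcB (f := A) (g := B)); smooth_pc_tac
  | |- smooth_pc (fun y => ?c * @?A y) =>
      apply: (smooth_pcZ c (f := A)); smooth_pc_tac
  | |- smooth_pc (fun y => \sum_(i < _) _) => apply: smooth_pc_sum; smooth_pc_tac
  | |- smooth_pc _ => solve [eauto with smooth_fields]
  end.

Section MinkowskiTensors.
Variables (R : realType) (n : nat).
Notation pt := 'rV[R]_n.
Implicit Types (f w tr : pt -> R) (v : 'I_n -> pt -> R)
  (t : 'I_n -> 'I_n -> pt -> R).

Lemma meta_sqr (a : 'I_n) : meta a * meta a = 1 :> R.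
Proof. by rewrite /meta; case: ifP => _; rewrite ?mulN1r ?opprK ?mul1r. Qed.

Lemma etamC (a b : 'I_n) : etam a b = etam b a :> R.
Proof. by rewrite /etam eq_sym; case: eqP => // ->. Qed.

Lemma contract_etam (F : 'I_n -> R) b :
  \sum_(a < n) meta a * (etam a b * F a) = F b.
Proof.
rewrite (bigD1 b) //= big1 ?addr0; first by rewrite /etam eqxx mulrA meta_sqr mul1r.
by move=> a nab; rewrite /etam (negbTE nab) mul0r mulr0.
Qed.

Lemma trace_etam : \sum_(a < n) meta a * etam a a = n%:R :> R.
Proof.
under eq_bigr => a _ do rewrite /etam eqxx meta_sqr.
by rewrite sumr_const card_ord.
Qed.

Definition div_cov v : pt -> R :=
  fun x => \sum_(a < n) meta a * partial a (v a) x.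
Definition div_tensor t (b : 'I_n) : pt -> R :=
  fun x => \sum_(a < n) meta a * partial a (t a b) x.
Definition scalar_part w tr (a b : 'I_n) : pt -> R :=
  fun x => partial a (partial b w) x - n%:R^-1 * etam a b * box w x
           + n%:R^-1 * etam a b * tr x.
Definition vector_part v (a b : 'I_n) : pt -> R :=
  fun x => partial a (v b) x + partial b (v a) x.

Lemma smooth_div_cov v : (forall a, smooth (v a)) -> smooth (div_cov v).
Proof. by move=> sv; rewrite /div_cov; smooth_tac. Qed.

Lemma smooth_div_tensor t b :
  (forall a b, smooth (t a b)) -> smooth (div_tensor t b).
Proof. by move=> st; rewrite /div_tensor; smooth_tac. Qed.

Lemma smooth_scalar_part w tr a b : smooth w -> smooth tr ->
  smooth (scalar_part w tr a b).
Proof. by move=> sw st; rewrite /scalar_part; smooth_tac. Qed.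

Lemma smooth_vector_part v a b : (forall a, smooth (v a)) ->
  smooth (vector_part v a b).
Proof. by move=> sv; rewrite /vector_part; smooth_tac. Qed.

Local Hint Resolve smooth_div_cov smooth_div_tensor smooth_scalar_part
  smooth_vector_part : smooth_fields.

Lemma partial_box c f : smooth f -> partial c (box f) = box (partial c f).
Proof.
move=> sf; rewrite /box partial_sum; last by smooth_tac.
apply/funext => x; apply: eq_bigr => a _; rewrite partialZ; last by smooth_tac.
by rewrite (partialC c a (smooth_partial a sf)) (partialC c a sf).
Qed.

Lemma boxZ (c : R) f :
  smooth f -> box (fun x => c * f x) = (fun x => c * box f x).
Proof.
move=> sf; apply/funext => x; rewrite /box mulr_sumr; apply: eq_bigr => a _.
by rewrite !partialZ 1?mulrCA //; smooth_tac.
Qed.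

Lemma div_covB v1 v2 : (forall a, smooth (v1 a)) -> (forall a, smooth (v2 a)) ->
  div_cov (fun a x => v1 a x - v2 a x) = (fun x => div_cov v1 x - div_cov v2 x).
Proof.
move=> s1 s2; apply/funext => x; rewrite /div_cov -sumrB.
by apply: eq_bigr => a _; rewrite partialB ?mulrBr //; smooth_tac.
Qed.

Lemma div_covZ (c : R) v : (forall a, smooth (v a)) ->
  div_cov (fun a x => c * v a x) = (fun x => c * div_cov v x).
Proof.
move=> sv; apply/funext => x; rewrite /div_cov mulr_sumr.
by apply: eq_bigr => a _; rewrite partialZ 1?mulrCA //; smooth_tac.
Qed.

Lemma div_cov_box v : (forall a, smooth (v a)) ->
  div_cov (fun a => box (v a)) = box (div_cov v).
Proof.
move=> sv; apply/funext => x; rewrite {2}/box /div_cov.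
have E c : partial c (partial c (fun y => \sum_(a < n) meta a * partial a (v a) y)) =
    fun y => \sum_(a < n) meta a * partial c (partial c (partial a (v a))) y.
  rewrite !partial_sum; try smooth_tac.
  by apply/funext => y; apply: eq_bigr => a _; rewrite !partialZ //; smooth_tac.
under [RHS]eq_bigr => c _ do rewrite E mulr_sumr.
rewrite exchange_big /=; apply: eq_bigr => a _.
rewrite partial_box; last by smooth_tac.
by rewrite /box mulr_sumr; apply: eq_bigr => c _; rewrite mulrCA.
Qed.

Lemma div_cov_div_tensor t : (forall a b, smooth (t a b)) ->
  div_cov (div_tensor t) = fun x =>
    \sum_(a < n) \sum_(b < n) meta a * meta b * partial a (partial b (t a b)) x.
Proof.
move=> st; apply/funext => x; rewrite /div_cov exchange_big /=.
apply: eq_bigr => b _; rewrite /div_tensor partial_sum; last by smooth_tac.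
rewrite mulr_sumr; apply: eq_bigr => a _; rewrite partialZ; last by smooth_tac.
by rewrite (partialC b a (st a b)) mulrA [meta b * _]mulrC.
Qed.

Lemma div_tensorD t1 t2 b :
  (forall a b, smooth (t1 a b)) -> (forall a b, smooth (t2 a b)) ->
  div_tensor (fun a b x => t1 a b x + t2 a b x) b =
  (fun x => div_tensor t1 b x + div_tensor t2 b x).
Proof.
move=> s1 s2; apply/funext => x; rewrite /div_tensor -big_split /=.
by apply: eq_bigr => a _; rewrite partialD ?mulrDr //; smooth_tac.
Qed.

Lemma div_scalar_part w tr b : smooth w -> smooth tr ->
  div_tensor (scalar_part w tr) b =
  (fun x => (1 - n%:R^-1) * partial b (box w) x + n%:R^-1 * partial b tr x).
Proof.
move=> sw st; apply/funext => x; rewrite /div_tensor.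
have E a : partial a (scalar_part w tr a b) x =
    partial a (partial a (partial b w)) x
    - n%:R^-1 * (etam a b * partial a (box w) x)
    + n%:R^-1 * (etam a b * partial a tr x).
  rewrite /scalar_part partialD; try smooth_tac.
  rewrite partialB; try smooth_tac.
  by rewrite !partialZ /= ?mulrA //; smooth_tac.
under eq_bigr => a _ do rewrite E.
have -> : \sum_(a < n) meta a * (partial a (partial a (partial b w)) x
      - n%:R^-1 * (etam a b * partial a (box w) x)
      + n%:R^-1 * (etam a b * partial a tr x)) =
    box (partial b w) x
    - n%:R^-1 * \sum_(a < n) meta a * (etam a b * partial a (box w) x)
    + n%:R^-1 * \sum_(a < n) meta a * (etam a b * partial a tr x).
  by rewrite /box !mulr_sumr -sumrB -big_split /=; apply: eq_bigr => a _; ring.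
by rewrite !contract_etam -partial_box //; ring.
Qed.

Lemma div_vector_part v b : (forall a, smooth (v a)) ->
  div_tensor (vector_part v) b =
  (fun x => box (v b) x + partial b (div_cov v) x).
Proof.
move=> sv; apply/funext => x; rewrite /div_tensor /div_cov.
rewrite partial_sum; last by smooth_tac.
rewrite /box -big_split /=; apply: eq_bigr => a _.
rewrite /vector_part partialD; try smooth_tac.
by rewrite partialZ /=; [rewrite mulrDr (partialC a b (sv a)) | smooth_tac].
Qed.

Lemma div_tensor_decomposition w tr v t b :
  smooth w -> smooth tr -> (forall a, smooth (v a)) ->
  (forall a b, smooth (t a b)) ->
  div_tensor (fun a b x =>
    scalar_part w tr a b x + vector_part v a b x + t a b x) b =
  (fun x => (1 - n%:R^-1) * partial b (box w) x + n%:R^-1 * partial b tr x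
            + box (v b) x + partial b (div_cov v) x + div_tensor t b x).
Proof.
move=> sw st sv stt.
rewrite div_tensorD; try smooth_tac.
rewrite (div_tensorD b (t1 := scalar_part w tr)); try smooth_tac.
rewrite div_scalar_part // div_vector_part //.
by apply/funext => x /=; rewrite !addrA.
Qed.

Lemma scalar_part_sym w tr a b :
  smooth w -> scalar_part w tr a b = scalar_part w tr b a.
Proof. by move=> sw; rewrite /scalar_part (partialC a b sw) etamC. Qed.

Lemma vector_part_sym v a b : vector_part v a b = vector_part v b a.
Proof. by apply/funext => x; rewrite /vector_part addrC. Qed.

Lemma trace_scalar_part w tr x : n%:R != 0 :> R ->
  \sum_(a < n) meta a * scalar_part w tr a a x = tr x.
Proof.
move=> n0; rewrite /scalar_part.
have -> B T : \sum_(a < n) meta a * (partial a (partial a w) x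
      - n%:R^-1 * etam a a * B + n%:R^-1 * etam a a * T) =
    box w x - n%:R^-1 * B * \sum_(a < n) meta a * etam a a
    + n%:R^-1 * T * \sum_(a < n) meta a * etam a a.
  by rewrite /box !mulr_sumr -sumrB -big_split /=; apply: eq_bigr => a _; ring.
by rewrite trace_etam !(mulrAC _^-1 _ n%:R) mulVf // !mul1r subrr add0r.
Qed.

Lemma trace_vector_part v x :
  \sum_(a < n) meta a * vector_part v a a x = 2 * div_cov v x.
Proof.
rewrite /div_cov mulr_sumr; apply: eq_bigr => a _.
by rewrite /vector_part; ring.
Qed.

End MinkowskiTensors.

#[export] Hint Resolve smooth_div_cov smooth_div_tensor smooth_scalar_part
  smooth_vector_part : smooth_fields.

Section Decomposition.
Variables (R : realType) (n : nat).
Notation pt := 'rV[R]_n.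
Variable G : (pt -> R) -> (pt -> R).
Hypothesis hG : is_retarded_green G.
Hypothesis n_ge2 : (2 <= n)%N.
Variable h : 'I_n -> 'I_n -> pt -> R.
Hypotheses (h_sym : forall a b, h a b = h b a)
  (h_smooth : forall a b, smooth (h a b)) (h_pc : pc_tensor2 h).

Lemma smooth_pc_h a b : smooth_pc (h a b).
Proof. by split; [exact: h_smooth | exact: (pc_tensor2P h).1]. Qed.

Local Hint Resolve smooth_pc_h : smooth_fields.

Lemma natr_n_neq0 : n%:R != 0 :> R.
Proof. by rewrite pnatr_eq0 -lt0n (leq_trans _ n_ge2). Qed.

Lemma natr_n_sub1_neq0 : n%:R - 1 != 0 :> R.
Proof. by rewrite subr_eq0 pnatr_eq1; case: (n) n_ge2 => [|[|]]. Qed.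

Lemma n_sub1_over_n : (n%:R - 1) / n%:R = 1 - n%:R^-1 :> R.
Proof. by rewrite mulrBl divff ?mul1r //; exact: natr_n_neq0. Qed.

Lemma n_sub1_over_nK : (n%:R - 1) / n%:R * (n%:R / (n%:R - 1)) = 1 :> R.
Proof.
by rewrite mulrA divfK ?divff //; [exact: natr_n_sub1_neq0 | exact: natr_n_neq0].
Qed.

Definition tr_h : pt -> R := fun x => \sum_(a < n) meta a * h a a x.

Definition is_decomposition (w : pt -> R) (v : 'I_n -> pt -> R)
    (t : 'I_n -> 'I_n -> pt -> R) : Prop :=
  [/\ smooth_pc w,
      (forall a, smooth (v a)) /\ pc_covector v,
      [/\ forall a b, t a b = t b a, forall a b, smooth (t a b) & pc_tensor2 t],
      [/\ div_cov v = (fun _ => 0), forall b, div_tensor t b = (fun _ => 0) &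
          (fun x => \sum_(a < n) meta a * t a a x) = (fun _ => 0)] &
      forall a b x,
        h a b x = scalar_part w tr_h a b x + vector_part v a b x + t a b x].

Definition w_source : pt -> R := fun y =>
  \sum_(a < n) \sum_(b < n) meta a * meta b * partial a (partial b (h a b)) y
  - n%:R^-1 * box tr_h y.

Definition w_h : pt -> R := fun x => n%:R / (n%:R - 1) * G (G w_source) x.

Definition v_source (w : pt -> R) (b : 'I_n) : pt -> R := fun y =>
  div_tensor h b y - n%:R^-1 * partial b tr_h y
  - (n%:R - 1) / n%:R * partial b (box w) y.

Definition v_h (b : 'I_n) : pt -> R := G (v_source w_h b).

Definition hTT_h (a b : 'I_n) : pt -> R :=
  fun x => h a b x - scalar_part w_h tr_h a b x - vector_part v_h a b x.

Lemma smooth_pc_tr_h : smooth_pc tr_h.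
Proof. by rewrite /tr_h; smooth_pc_tac. Qed.
Local Hint Resolve smooth_pc_tr_h : smooth_fields.

Lemma smooth_pc_w_source : smooth_pc w_source.
Proof. by rewrite /w_source; smooth_pc_tac. Qed.
Local Hint Resolve smooth_pc_w_source : smooth_fields.

Lemma smooth_pc_w_h : smooth_pc w_h.
Proof. by rewrite /w_h; smooth_pc_tac. Qed.
Local Hint Resolve smooth_pc_w_h : smooth_fields.

Lemma smooth_pc_v_source w b : smooth_pc w -> smooth_pc (v_source w b).
Proof. by move=> sw; rewrite /v_source /div_tensor; smooth_pc_tac. Qed.

Lemma smooth_pc_v_h b : smooth_pc (v_h b).
Proof. exact (smooth_pc_Green hG (smooth_pc_v_source b smooth_pc_w_h)). Qed.
Local Hint Resolve smooth_pc_v_h : smooth_fields.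

Lemma smooth_pc_hTT_h a b : smooth_pc (hTT_h a b).
Proof. by rewrite /hTT_h /scalar_part /vector_part; smooth_pc_tac. Qed.

Lemma div_cov_v_source w : smooth w ->
  div_cov (v_source w) = (fun x => w_source x - (n%:R - 1) / n%:R * box (box w) x).
Proof.
move=> sw; rewrite /v_source div_covB; try smooth_tac.
rewrite div_covB; try smooth_tac.
by rewrite !div_covZ ?div_cov_div_tensor //; smooth_tac.
Qed.

Lemma div_tensor_h_decomposition w v t b :
  smooth w -> (forall a, smooth (v a)) -> (forall a b, smooth (t a b)) ->
  (forall a b x,
     h a b x = scalar_part w tr_h a b x + vector_part v a b x + t a b x) ->
  div_tensor h b =
  (fun x => (1 - n%:R^-1) * partial b (box w) x + n%:R^-1 * partial b tr_h x
            + box (v b) x + partial b (div_cov v) x + div_tensor t b x).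
Proof.
move=> sw sv st hE; rewrite -div_tensor_decomposition //; last by smooth_tac.
by congr div_tensor; do 2 apply/funext => ?; apply/funext => x; rewrite hE.
Qed.

Lemma box_w_h : box (box w_h) = (fun x => n%:R / (n%:R - 1) * w_source x).
Proof.
have sG : smooth_pc (G w_source) by smooth_pc_tac.
rewrite /w_h (boxZ _ (f := G (G w_source))); last by smooth_tac.
rewrite box_Green // (boxZ _ (f := G w_source)); last by smooth_tac.
by rewrite box_Green //; smooth_pc_tac.
Qed.

Lemma div_cov_v_h : div_cov v_h = (fun _ => 0).
Proof.
(* div v_h is a past-compact solution of the wave equation, so it vanishes. *)
rewrite -(Green0 hG); apply: (eq_Green_of_box hG).
  by rewrite /div_cov; smooth_pc_tac.
rewrite -div_cov_box; last by smooth_tac.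
have -> : (fun a => box (v_h a)) = v_source w_h.
  by apply/funext => a; exact: (box_Green hG (smooth_pc_v_source a smooth_pc_w_h)).
rewrite div_cov_v_source; last by smooth_tac.
by rewrite box_w_h; apply/funext => x; rewrite mulrA n_sub1_over_nK mul1r subrr.
Qed.

Lemma h_decomposition a b x :
  h a b x = scalar_part w_h tr_h a b x + vector_part v_h a b x + hTT_h a b x.
Proof. by rewrite /hTT_h; ring. Qed.

Lemma div_tensor_hTT_h b : div_tensor hTT_h b = (fun _ => 0).
Proof.
have sw : smooth w_h by smooth_tac.
have sv a : smooth (v_h a) by smooth_tac.
have st a c : smooth (hTT_h a c) by have [] := smooth_pc_hTT_h a c.
have := div_tensor_h_decomposition b sw sv st h_decomposition.
rewrite div_cov_v_h partial_cst (box_Green hG (smooth_pc_v_source b smooth_pc_w_h)).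
move=> E; apply/funext => x; have /= Ex := congr1 (fun f => f x) E.
apply: (addrI (div_tensor h b x)); rewrite addr0 {2}Ex /v_source n_sub1_over_n.
ring.
Qed.

Lemma decomposition_exists : is_decomposition w_h v_h hTT_h.
Proof.
split.
- exact: smooth_pc_w_h.
- by split; [smooth_tac | apply/pc_covectorP => a; have [] := smooth_pc_v_h a].
- split.
  + move=> a b; rewrite /hTT_h h_sym vector_part_sym scalar_part_sym //.
    by smooth_tac.
  + by move=> a b; have [] := smooth_pc_hTT_h a b.
  + by apply/pc_tensor2P => a b; have [] := smooth_pc_hTT_h a b.
- split; [exact: div_cov_v_h | exact: div_tensor_hTT_h |].
  apply/funext => x; rewrite /hTT_h.
  under eq_bigr => a _ do rewrite !mulrBr.
  rewrite !sumrB trace_scalar_part ?trace_vector_part; last exact: natr_n_neq0.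
  by rewrite div_cov_v_h -/(tr_h x) mulr0 !subrr.
- exact: h_decomposition.
Qed.

Section Uniqueness.
Variables (w : pt -> R) (v : 'I_n -> pt -> R) (t : 'I_n -> 'I_n -> pt -> R).
Hypothesis decomposition_wvt : is_decomposition w v t.

Lemma box_v_of_decomposition b : box (v b) = v_source w b.
Proof.
have [[sw _] [sv _] [_ st _] [dv dt _] hE] := decomposition_wvt.
apply/funext => y; rewrite /v_source (div_tensor_h_decomposition b sw sv st hE).
by rewrite dv dt partial_cst n_sub1_over_n /=; ring.
Qed.

Lemma w_source_of_decomposition :
  w_source = (fun x => (n%:R - 1) / n%:R * box (box w) x).
Proof.
have [[sw _] [sv _] _ [dv _ _] _] := decomposition_wvt.
have vE : v_source w = (fun b => box (v b)).
  by apply/funext => b; rewrite box_v_of_decomposition.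
have E := div_cov_v_source sw.
rewrite vE div_cov_box ?dv ?box_cst in E; last exact: sv.
apply/funext => x.
by have /= /eqP := congr1 (fun f => f x) E; rewrite eq_sym subr_eq0 => /eqP.
Qed.

Lemma w_of_decomposition : w = w_h.
Proof.
have [sw _ _ _ _] := decomposition_wvt.
have sbw : smooth_pc (box w) by smooth_pc_tac.
have sbbw : smooth_pc (box (box w)) by smooth_pc_tac.
rewrite /w_h w_source_of_decomposition (GreenZ hG _ sbbw) (Green_box hG sbw).
rewrite (GreenZ hG _ sbw) (Green_box hG sw); apply/funext => x.
by rewrite mulrA [n%:R / _ * _]mulrC n_sub1_over_nK mul1r.
Qed.

Lemma v_of_decomposition : v = v_h.
Proof.
have [_ [sv pv] _ _ _] := decomposition_wvt.
apply/funext => b; rewrite /v_h -w_of_decomposition -box_v_of_decomposition.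
by rewrite Green_box //; split; [exact: sv | exact: (pc_covectorP v).1].
Qed.

Lemma hTT_of_decomposition : t = hTT_h.
Proof.
have [_ _ _ _ hE] := decomposition_wvt.
apply/funext => a; apply/funext => b; apply/funext => x.
by rewrite /hTT_h -w_of_decomposition -v_of_decomposition hE; ring.
Qed.

End Uniqueness.

Lemma decomposition_unique w v t :
  is_decomposition w v t -> [/\ w = w_h, v = v_h & t = hTT_h].
Proof.
move=> dec; split;
  [exact: w_of_decomposition dec | exact: v_of_decomposition dec
  | exact: hTT_of_decomposition dec].
Qed.

End Decomposition.

Theorem proposition2p1 (R : realType) (n : nat)
  (G : ('rV[R]_n -> R) -> ('rV[R]_n -> R)) (hG : is_retarded_green G)
  (hn : (2 <= n)%N)
  (h : 'I_n -> 'I_n -> 'rV[R]_n -> R)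
  (hsym : forall a b, h a b = h b a)
  (hsmooth : forall a b, smooth (h a b))
  (hpc : pc_tensor2 h) :
  let tr := fun x => \sum_(a < n) meta a * h a a x in
  let decomp := fun (w : 'rV[R]_n -> R) (v : 'I_n -> 'rV[R]_n -> R)
                    (hTT : 'I_n -> 'I_n -> 'rV[R]_n -> R) =>
    [/\ smooth w /\ pc_scalar w,
        (forall a, smooth (v a)) /\ pc_covector v,
        [/\ forall a b, hTT a b = hTT b a,
            forall a b, smooth (hTT a b) & pc_tensor2 hTT],
        [/\ (fun x => \sum_(a < n) meta a * partial a (v a) x) = (fun _ => 0),
        (forall b, (fun x => \sum_(a < n) meta a * partial a (hTT a b) x)
                   = (fun _ => 0)) &
        (fun x => \sum_(a < n) meta a * hTT a a x) = (fun _ => 0)] &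
        forall a b x,
          h a b x =
            (partial a (partial b w) x - n%:R^-1 * etam a b * box w x
               + n%:R^-1 * etam a b * tr x)
            + (partial a (v b) x + partial b (v a) x)
            + hTT a b x] in
  exists w v hTT,
    [/\ decomp w v hTT,
        (forall w' v' hTT', decomp w' v' hTT' ->
           [/\ w' = w, v' = v & hTT' = hTT]),
        w = (fun x => n%:R / (n%:R - 1) *
               G (G (fun y => \sum_(a < n) \sum_(b < n)
                         meta a * meta b * partial a (partial b (h a b)) y
                       - n%:R^-1 * box tr y)) x) &
        v = (fun b => G (fun y => \sum_(a < n) meta a * partial a (h a b) y
                          - n%:R^-1 * partial b tr y
                          - (n%:R - 1) / n%:R * partial b (box w) y))].
Proof.
move=> tr decomp; exists (w_h G h), (v_h G h), (hTT_h G h); split.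
- exact: decomposition_exists.
- by move=> w v t; apply: decomposition_unique.
- by [].
- by [].
Qed.
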